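(* Let $(x_n)$ be a nonincreasing interval-filling sequence of positive reals with cardinal function $f$, and suppose $r_k>x_k$ for some $k\in\mathbb{N}$. Then there exists $x\in\mathcal{A}((x_n))$ with $f(x)\ge3$ (with $\omega,\mathfrak{c}$ counting as $\ge3$).
   Context: For a summable sequence $\mathbf{x}=(x_n)$ of positive reals, $\mathcal{A}(\mathbf{x})=\{\sum_{n\in A}x_n: A\subseteq\mathbb{N}\}$ is its achievement set and its cardinal function $f$ assigns to $x\in\mathcal{A}(\mathbf{x})$ the cardinality (a positive integer, $\omega$, or $\mathfrak{c}$) of $\{(\varepsilon_n)\in\{0,1\}^{\mathbb{N}}:\sum\varepsilon_nx_n=x\}$. The sequence is interval-filling if $\mathcal{A}(\mathbf{x})$ is an interval. The tail sums are $r_n=\sum_{k=n+1}^\infty x_k$. *)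

From Stdlib Require Import Reals.
From Coquelicot Require Import Coquelicot.
Open Scope R_scope.

Definition subseries (x : nat -> R) (eps : nat -> bool) : nat -> R :=
  fun n => if eps n then x n else 0.

Definition represents (x : nat -> R) (eps : nat -> bool) (y : R) : Prop :=
  is_series (subseries x eps) y.

Definition achievement_set (x : nat -> R) (y : R) : Prop :=
  exists eps : nat -> bool, represents x eps y.

Definition interval_filling (x : nat -> R) : Prop :=
  forall a b c, achievement_set x a -> achievement_set x b ->
    a <= c <= b -> achievement_set x c.

Definition tail_sum (x : nat -> R) (n : nat) : R :=
  Series (fun j => x (j + S n)%nat).

(* Kakeya: if the nonincreasing sequence is interval-filling then x_n <= r_n for every n,
   for otherwise no point strictly between r_n and x_n is a subsum (a subsum using an index
   <= n is at least x_n, one avoiding them is at most r_n).  Under this condition the greedy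
   algorithm restricted to indices > m represents every number of [0, r_m].  Now pick n > k
   with x_n < r_k - x_k and let y = x_k + x_n.  Then y has the representation {k, n}, the
   representation {k} together with a greedy representation of x_n by indices > n, and a
   greedy representation by indices > k; the first two differ at n, the third avoids k. *)

From Stdlib Require Import Reals Lra Lia Classical.
From Coquelicot Require Import Coquelicot.
Open Scope R_scope.

Lemma sum_Sn_R (a : nat -> R) N : sum_n a (S N) = sum_n a N + a (S N).
Proof. rewrite sum_Sn. reflexivity. Qed.

Lemma partial_sum_le_series (a : nat -> R) (l : R) :
  (forall i, 0 <= a i) -> is_series a l -> forall N, sum_n a N <= l.
Proof.
  intros Ha Hl. apply is_lim_seq_incr_compare; [exact Hl |].
  intro N. rewrite sum_Sn_R. specialize (Ha (S N)). lra.
Qed.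

Definition single_term (j : nat) (c : R) : nat -> R := fun i => if Nat.eqb i j then c else 0.

Lemma sum_n_single_term j c N : sum_n (single_term j c) N = if Nat.leb j N then c else 0.
Proof.
  induction N as [|N IH].
  - rewrite sum_O. unfold single_term. destruct j; reflexivity.
  - rewrite sum_Sn_R, IH. unfold single_term.
    destruct (Nat.leb_spec j N), (Nat.eqb_spec (S N) j), (Nat.leb_spec j (S N));
      try lia; lra.
Qed.

Lemma is_series_single_term j c : is_series (single_term j c) c.
Proof.
  change (is_lim_seq (sum_n (single_term j c)) c).
  apply is_lim_seq_ext_loc with (fun _ => c); [| apply is_lim_seq_const].
  exists j. intros N HN. rewrite sum_n_single_term.
  destruct (Nat.leb_spec j N); [reflexivity | lia].
Qed.

Lemma represents_none (x : nat -> R) : represents x (fun _ => false) 0.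
Proof.
  apply is_series_ext with (single_term 0 0); [| apply is_series_single_term].
  intro i. unfold single_term, subseries. destruct (Nat.eqb i 0); reflexivity.
Qed.

Lemma represents_all (x : nat -> R) : ex_series x -> represents x (fun _ => true) (Series x).
Proof. intro hsum. exact (Series_correct x hsum). Qed.

Definition add_index (e : nat -> bool) (j : nat) : nat -> bool :=
  fun i => if Nat.eqb i j then true else e i.

Lemma add_index_same e j : add_index e j j = true.
Proof. unfold add_index. now rewrite Nat.eqb_refl. Qed.

Lemma add_index_other e j i : i <> j -> add_index e j i = e i.
Proof. intro Hij. unfold add_index. now destruct (Nat.eqb_spec i j). Qed.

Lemma represents_add_index (x : nat -> R) e y j :
  represents x e y -> e j = false -> represents x (add_index e j) (y + x j).
Proof.
  intros He Hj.
  apply is_series_ext with (fun i => subseries x e i + single_term j (x j) i).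
  - intro i. unfold add_index, subseries, single_term.
    destruct (Nat.eqb_spec i j); [subst; rewrite Hj |]; lra.
  - exact (is_series_plus _ _ _ _ He (is_series_single_term j (x j))).
Qed.

Lemma represents_term_le (x : nat -> R) e y i :
  (forall n, 0 <= x n) -> represents x e y -> e i = true -> x i <= y.
Proof.
  intros hpos He Hei.
  rewrite <- (is_series_unique _ _ He), <- (is_series_unique _ _ (is_series_single_term i (x i))).
  apply Series_le; [| exists y; exact He].
  intro n. unfold single_term, subseries.
  destruct (Nat.eqb_spec n i); [subst; rewrite Hei | destruct (e n)]; auto with real.
Qed.

Lemma is_lim_seq_0_lt_after (u : nat -> R) (eps : R) k :
  is_lim_seq u 0 -> 0 < eps -> exists n, (k < n)%nat /\ u n < eps.
Proof.
  intros Hu Heps.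
  destruct (proj2 (is_lim_seq_spec u 0) Hu (mkposreal _ Heps)) as [N HN].
  exists (S (max N k)). split; [lia |].
  specialize (HN (S (max N k)) ltac:(lia)). simpl in HN.
  rewrite Rminus_0_r in HN. apply Rabs_def2 in HN. lra.
Qed.

Section TailSums.

Variable x : nat -> R.
Hypothesis hsum : ex_series x.

Lemma tail_sum_shift n : tail_sum x n = Series (fun k => x (S n + k)%nat).
Proof. apply Series_ext. intro k. f_equal. lia. Qed.

Lemma tail_sum_eq n : tail_sum x n = Series x - sum_n x n.
Proof.
  rewrite tail_sum_shift, (Series_incr_n x (S n)) by (lia || exact hsum).
  simpl pred. rewrite <- sum_n_Reals. ring.
Qed.

Lemma tail_sum_S n : tail_sum x (S n) = tail_sum x n - x (S n).
Proof. rewrite !tail_sum_eq, sum_Sn_R. ring. Qed.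

Lemma tail_sum_lim : is_lim_seq (tail_sum x) 0.
Proof.
  apply is_lim_seq_ext with (fun n => Series x - sum_n x n).
  { intro n. symmetry. apply tail_sum_eq. }
  replace (Finite 0) with (Finite (Series x - Series x)) by (f_equal; ring).
  apply is_lim_seq_minus'; [apply is_lim_seq_const | exact (Series_correct x hsum)].
Qed.

Lemma tail_sum_nonneg n : (forall i, 0 <= x i) -> 0 <= tail_sum x n.
Proof.
  intro hpos. rewrite tail_sum_eq.
  pose proof (partial_sum_le_series x _ hpos (Series_correct x hsum) n). lra.
Qed.

Lemma represents_le_tail_sum e y n :
  (forall i, 0 <= x i) -> (forall i, (i <= n)%nat -> e i = false) ->
  represents x e y -> y <= tail_sum x n.
Proof.
  intros hpos Hlow He.
  rewrite <- (is_series_unique _ _ He), tail_sum_shift.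
  rewrite (Series_incr_n _ (S n)) by (lia || (exists y; exact He)).
  rewrite sum_eq_R0 by (intros i Hi; unfold subseries; rewrite Hlow by lia; reflexivity).
  rewrite Rplus_0_l.
  apply Series_le; [| apply (ex_series_incr_n x (S n)); exact hsum].
  intro k. unfold subseries. destruct (e (S n + k)%nat); auto with real.
Qed.

End TailSums.

Section Kakeya.

Variable x : nat -> R.
Hypothesis hnonneg : forall n, 0 <= x n.
Hypothesis hsum : ex_series x.
Hypothesis hnoninc : Un_decreasing x.
Hypothesis hfill : interval_filling x.

Lemma interval_filling_term_le_tail_sum n : x n <= tail_sum x n.
Proof.
  apply Rnot_lt_le. intro Hlt.
  pose proof (tail_sum_nonneg x hsum n hnonneg) as Hr.
  set (c := (x n + tail_sum x n) / 2).
  assert (Hc : achievement_set x c).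
  { apply hfill with 0 (Series x).
    - exists (fun _ => false). apply represents_none.
    - exists (fun _ => true). apply represents_all, hsum.
    - pose proof (represents_term_le x _ _ n hnonneg (represents_all x hsum) eq_refl).
      unfold c. lra. }
  destruct Hc as [e He].
  destruct (classic (exists i, (i <= n)%nat /\ e i = true)) as [[i [Hi Hei]] | Hnone].
    pose proof (represents_term_le x e c i hnonneg He Hei).
    pose proof (decreasing_prop x i n hnoninc Hi).
    unfold c in *. lra.
  - assert (Hlow : forall i, (i <= n)%nat -> e i = false).
    { intros i Hi. destruct (e i) eqn:Hei; [| reflexivity].
      exfalso. apply Hnone. exists i. auto. }
    pose proof (represents_le_tail_sum x hsum e c n hnonneg Hlow He).
    unfold c in *. lra.
Qed.

End Kakeya.

Section Greedy.

Variables (x : nat -> R) (m : nat) (z : R).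

Definition greedy_admits (s : R) (i : nat) : bool :=
  (Nat.ltb m i && if Rle_dec (s + x i) z then true else false)%bool.

Fixpoint greedy_partial (i : nat) : R :=
  match i with
  | O => 0
  | S i => greedy_partial i + if greedy_admits (greedy_partial i) i then x i else 0
  end.

Definition greedy (i : nat) : bool := greedy_admits (greedy_partial i) i.

Lemma sum_n_greedy N : sum_n (subseries x greedy) N = greedy_partial (S N).
Proof.
  induction N as [|N IH].
  - rewrite sum_O. change (subseries x greedy 0 = 0 + subseries x greedy 0). ring.
  - rewrite sum_Sn_R, IH. reflexivity.
Qed.

Lemma greedy_false_le i : (i <= m)%nat -> greedy i = false.
Proof. intro Hi. unfold greedy, greedy_admits. destruct (Nat.ltb_spec m i); [lia | reflexivity]. Qed.

Lemma greedy_partial_zero_le i : (i <= S m)%nat -> greedy_partial i = 0.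
Proof.
  induction i as [|i IH]; intro Hi; [reflexivity |].
  change (greedy_partial i + (if greedy i then x i else 0) = 0).
  rewrite greedy_false_le, IH by lia. ring.
Qed.

Lemma greedy_partial_le : 0 <= z -> forall i, greedy_partial i <= z.
Proof.
  intros Hz i. induction i as [|i IH]; [exact Hz |].
  simpl. unfold greedy_admits.
  destruct (Nat.ltb m i); simpl; [destruct (Rle_dec (greedy_partial i + x i) z) |]; lra.
Qed.

Hypothesis hsum : ex_series x.
Hypothesis hkak : forall i, (m < i)%nat -> x i <= tail_sum x i.
Hypothesis hz : 0 <= z <= tail_sum x m.

Lemma greedy_gap_le_tail_sum i : (m <= i)%nat -> z - greedy_partial (S i) <= tail_sum x i.
Proof.
  induction 1 as [|i Hmi IH].
  - rewrite greedy_partial_zero_le by lia. lra.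
  - change (greedy_partial (S (S i)))
      with (greedy_partial (S i) + if greedy (S i) then x (S i) else 0).
    rewrite tail_sum_S by exact hsum.
    unfold greedy, greedy_admits.
    set (s := greedy_partial (S i)) in *.
    destruct (Nat.ltb_spec m (S i)); [| lia]. cbn [andb].
    destruct (Rle_dec (s + x (S i)) z).
    + lra.
    + pose proof (hkak (S i) ltac:(lia)) as Hk.
      rewrite tail_sum_S in Hk by exact hsum. lra.
Qed.

Lemma represents_greedy : represents x greedy z.
Proof.
  change (is_lim_seq (sum_n (subseries x greedy)) z).
  apply is_lim_seq_le_le_loc with (fun N => z - tail_sum x N) (fun _ => z).
  - exists m. intros N HN. rewrite sum_n_greedy.
    pose proof (greedy_gap_le_tail_sum N HN).
    pose proof (greedy_partial_le (proj1 hz) (S N)). lra.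
  - replace (Finite z) with (Finite (z - 0)) by (f_equal; ring).
    apply is_lim_seq_minus'; [apply is_lim_seq_const | exact (tail_sum_lim x hsum)].
  - apply is_lim_seq_const.
Qed.

End Greedy.

Theorem lemma3p7 (x : nat -> R)
  (hpos : forall n, 0 < x n)
  (hsum : ex_series x)
  (hnoninc : forall n, x (S n) <= x n)
  (hfill : interval_filling x)
  (hk : exists k, tail_sum x k > x k) :
  exists y, achievement_set x y /\
    exists e1 e2 e3 : nat -> bool,
      represents x e1 y /\ represents x e2 y /\ represents x e3 y /\
      e1 <> e2 /\ e1 <> e3 /\ e2 <> e3.
Proof.
  destruct hk as [k hk].
  assert (hnn : forall n, 0 <= x n) by (intro; left; apply hpos).
  pose proof (interval_filling_term_le_tail_sum x hnn hsum hnoninc hfill) as hkak.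
  destruct (is_lim_seq_0_lt_after x (tail_sum x k - x k) k (ex_series_lim_0 x hsum))
    as [n [Hkn Hn]]; [lra |].
  set (y := x k + x n).
  pose (e1 := add_index (add_index (fun _ => false) n) k).
  pose (e2 := add_index (greedy x n (x n)) k).
  pose (e3 := greedy x k y).
  assert (R1 : represents x e1 y).
  { unfold e1, y. replace (x k + x n) with (0 + x n + x k) by ring.
    apply represents_add_index; [apply represents_add_index; [apply represents_none | reflexivity] |].
    rewrite add_index_other by lia. reflexivity. }
  assert (R2 : represents x e2 y).
  { unfold e2, y. rewrite Rplus_comm.
    apply represents_add_index; [| apply greedy_false_le; lia].
    apply represents_greedy; [exact hsum | intros i _; apply hkak | split; [apply hnn | apply hkak]]. }
  assert (R3 : represents x e3 y).
  { apply represents_greedy; [exact hsum | intros i _; apply hkak |].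
    pose proof (hnn n). pose proof (hnn k). unfold y. lra. }
  assert (E1n : e1 n = true) by (unfold e1; rewrite add_index_other by lia; apply add_index_same).
  assert (E2n : e2 n = false) by (unfold e2; rewrite add_index_other by lia; apply greedy_false_le; lia).
  assert (E1k : e1 k = true) by apply add_index_same.
  assert (E2k : e2 k = true) by apply add_index_same.
  assert (E3k : e3 k = false) by (apply greedy_false_le; lia).
  exists y. split; [exists e3; exact R3 |].
  exists e1, e2, e3. repeat split; auto; intro E; subst; congruence.
Qed.
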